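(* Let $q$ be a prime power, $m\ge2$, $\ell\ge1$, $r_1,\dots,r_m\ge1$, $\ell\le k<m\ell$, and $n=\sum_{i=1}^m(\ell+r_i)$. Let $C_1,\dots,C_m\in\mathbb{F}_q^{k\times\ell}$, $D_i\in\mathbb{F}_q^{k\times r_i}$ for $i<m$ and $D_m'\in\mathbb{F}_q^{k\times(r_m-1)}$ be such that the matrix $(C_1\mid D_1\mid\dots\mid C_{m-1}\mid D_{m-1}\mid C_m\mid D_m')$, with blocks $(C_i\mid D_i)$ for $i<m$ and $(C_m\mid D_m')$, generates an $[n-1,k,\ell;r_1,\dots,r_{m-1},r_m-1]$-PMDS code. Let $y_1,\dots,y_\ell$ be variables and let $$G(y)=(C_1\mid D_1\mid\dots\mid C_m\mid D_m'\mid \textstyle\sum_{t=1}^\ell y_tC_m^{(t)})\in\mathbb{F}_q[y_1,\dots,y_\ell]^{k\times n},$$ where $C_m^{(t)}$ is the $t$-th column of $C_m$, with blocks $(C_i\mid D_i)$ for $i<m$ and $(C_m\mid D_m'\mid\sum_t y_tC_m^{(t)})$ as the $m$-th block. Let $\mathcal T_{k,\ell}(G(y))$ be the set of $k\times k$ submatrices of $G(y)$ with at most $\ell$ columns in each block, and $\tilde p(y)=\mathrm{lcm}\{\det S\mid S\in\mathcal T_{k,\ell}(G(y))\}$. Then the total degree of $\tilde p$ is at most $$M^*:=M(k-1;\ell+r_1,\dots,\ell+r_{m-1},\ell+r_m-1;\ell,\dots,\ell,\ell-1).$$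
   Context: For positive integers $n_1,\dots,n_m$ with $n=\sum_i n_i$, nonnegative integers $f_1,\dots,f_m$ and an integer $k\ge0$, set $N_0=0$, $N_i=\sum_{j\le i}n_j$, $J_i=\{N_{i-1}+1,\dots,N_i\}$ for $i=1,\dots,m$, and let $M(k;n_1,\dots,n_m;f_1,\dots,f_m)$ be the number of subsets $I\subseteq\{1,\dots,n\}$ with $|I|=k$ and $|I\cap J_i|\le f_i$ for all $i$. An $[n,k]$-MDS code is a linear code of length $n$, dimension $k$, minimum Hamming distance $n-k+1$. PMDS codes: for integers $\ell\ge1$, $r_1,\dots,r_m\ge0$, $n=\sum_i(r_i+\ell)$, a linear code $C\subseteq\mathbb{F}^n$ of dimension $k<n$ with generator matrix $G=(B_1\mid\dots\mid B_m)$, $B_i\in\mathbb{F}^{k\times(r_i+\ell)}$, is an $[n,k,\ell;r_1,\dots,r_m]$-PMDS code if (i) each row space of $B_i$ is an $[r_i+\ell,\ell]$-MDS code, and (ii) for any choice of $r_i$ erased coordinates in block $i$ for every $i$, puncturing $C$ at them gives an $[m\ell,k]$-MDS code. *)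

From HB Require Import structures.
From mathcomp Require Import all_boot all_order all_algebra.
From mathcomp Require Import mpoly.
Set Implicit Arguments. Unset Strict Implicit. Unset Printing Implicit Defensive.
Import Order.TTheory GRing.Theory.
Local Open Scope ring_scope.

Section Codes.
Variable F : fieldType.

Definition wt N (v : 'rV[F]_N) : nat := #|[set j : 'I_N | v 0 j != 0]|.

Definition has_min_dist k N (G : 'M[F]_(k, N)) (d : nat) : Prop :=
  (exists x : 'rV[F]_k, x *m G != 0 /\ wt (x *m G) = d) /\
  (forall x : 'rV[F]_k, x *m G != 0 -> (d <= wt (x *m G))%N).

Definition is_MDS k N (G : 'M[F]_(k, N)) (d : nat) : Prop :=
  \rank G = d /\ has_min_dist G (N - d + 1).

(* Restriction of G to the columns in S (= puncturing at the complement of S),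
   columns kept in increasing order. *)
Definition restrict k N (G : 'M[F]_(k, N)) (S : {set 'I_N}) : 'M[F]_(k, #|S|) :=
  colsub (fun t : 'I_#|S| => @enum_val _ (mem S) t) G.
End Codes.

Definition block_start m (s : 'I_m -> nat) (i : 'I_m) : nat :=
  (\sum_(j < m | (j < i)%N) s j)%N.
Definition block N m (s : 'I_m -> nat) (i : 'I_m) : {set 'I_N} :=
  [set j : 'I_N | (block_start s i <= j < block_start s i + s i)%N].

Arguments block {N m} s i.

Definition is_PMDS (F : fieldType) k n l m (r : 'I_m -> nat) (G : 'M[F]_(k, n)) : Prop :=
  [/\ [/\ (1 <= l)%N, n = (\sum_(i < m) (r i + l))%N, (k < n)%N & \rank G = k],
      (forall i : 'I_m, is_MDS (restrict G (block (fun j => r j + l) i)) l) &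
      (forall E : {set 'I_n},
         (forall i : 'I_m, #|E :&: block (fun j => r j + l) i| = r i) ->
         is_MDS (restrict G (~: E)) k)].

Definition Mcount (k m : nat) (ns fs : 'I_m -> nat) : nat :=
  #|[set I : {set 'I_(\sum_(i < m) ns i)} |
      (#|I| == k) && [forall i : 'I_m, (#|I :&: block ns i| <= fs i)%N]]|.

Definition mdvd n (R : comRingType) (a b : {mpoly R[n]}) : Prop :=
  exists c, b = c * a.
Definition is_lcm n (R : comRingType) (I : Type) (P : I -> Prop)
    (g : I -> {mpoly R[n]}) (p : {mpoly R[n]}) : Prop :=
  (forall i, P i -> mdvd (g i) p) /\
  (forall c, (forall i, P i -> mdvd (g i) c) -> mdvd p c).

(* total degree (0 for the zero polynomial) *)
Definition tdeg n (R : comRingType) (p : {mpoly R[n]}) : nat := (msize p).-1.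

Definition rprime m (r : 'I_m -> nat) (i : 'I_m) : nat :=
  if (i : nat) == m.-1 then (r i).-1 else r i.

Definition G0 (F : fieldType) k l m (r : 'I_m -> nat)
    (C : forall i : 'I_m, 'M[F]_(k, l)) (D : forall i : 'I_m, 'M[F]_(k, rprime r i)) :
    'M[F]_(k, \sum_(i < m) (l + rprime r i)) :=
  \mxrow_(i < m) row_mx (C i) (D i).

(* the new column sum_t y_t C_m^(t), where C_m is C at the last index m-1 *)
Definition newcol (F : fieldType) k l m (C : forall i : 'I_m, 'M[F]_(k, l)) :
    'cV[{mpoly F[l]}]_k :=
  \sum_(i < m | (i : nat) == m.-1) \sum_(t < l)
      'X_t *: map_mx (fun a => a%:MP) (col t (C i)).

Definition Gy (F : fieldType) k l m (r : 'I_m -> nat)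
    (C : forall i : 'I_m, 'M[F]_(k, l)) (D : forall i : 'I_m, 'M[F]_(k, rprime r i)) :
    'M[{mpoly F[l]}]_(k, \sum_(i < m) (l + rprime r i) + 1) :=
  row_mx (map_mx (fun a => a%:MP) (G0 C D)) (newcol C).

(* block sizes of G(y): l + r_i ; an admissible column selection for
   T_{k,l}(G(y)): strictly increasing f : 'I_k -> columns with at most l
   columns in each block. *)
Definition admissible N k l m (r : 'I_m -> nat) (f : 'I_k -> 'I_N) : Prop :=
  {homo f : a b / (a < b)%N} /\
  forall i : 'I_m, (#|[set t : 'I_k | f t \in block (fun j => l + r j) i]| <= l)%N.

(** Only the last column of G(y) depends on y, and it is linear in y, so
    every admissible k x k minor has total degree at most 1, and degree 0
    unless it uses the last column.  The lcm divides the product of all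
    admissible minors, so its degree is at most the number of admissible
    column selections through the last column.  Since an admissible selection
    is increasing, it is determined by its image; forgetting the last column
    therefore maps these selections injectively onto the (k-1)-subsets
    counted by M^*, the last block losing one slot. *)

From HB Require Import structures.
From mathcomp Require Import all_boot all_order all_algebra.
From mathcomp Require Import perm mpoly.
From mathcomp Require Import zify.
Set Implicit Arguments. Unset Strict Implicit. Unset Printing Implicit Defensive.
Import Order.TTheory GRing.Theory.

Section TotalDegree.
Local Open Scope ring_scope.
Variables (n : nat) (R : idomainType).
Implicit Types p q : {mpoly R[n]}.

Lemma tdeg0 : tdeg (0 : {mpoly R[n]}) = 0%N.
Proof. by rewrite /tdeg msize0. Qed.

Lemma tdegC c : tdeg (c%:MP : {mpoly R[n]}) = 0%N.
Proof. by rewrite /tdeg msizeC; case: (c != 0). Qed.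

Lemma tdegX i : tdeg ('X_i : {mpoly R[n]}) = 1%N.
Proof. by rewrite /tdeg msizeX mdeg1. Qed.

Lemma tdegN p : tdeg (- p) = tdeg p.
Proof. by rewrite /tdeg msizeN. Qed.

Lemma tdegM p q : p != 0 -> q != 0 -> tdeg (p * q) = (tdeg p + tdeg q)%N.
Proof.
move=> p0 q0; rewrite /tdeg msizeM //.
move: (msize_poly_eq0 p) (msize_poly_eq0 q); rewrite (negbTE p0) (negbTE q0).
by case: (msize p) => // a; case: (msize q) => // b _ _; rewrite addSn addnS.
Qed.

Lemma tdegM_le p q : (tdeg (p * q) <= tdeg p + tdeg q)%N.
Proof.
have [->|p0] := eqVneq p 0; first by rewrite mul0r tdeg0.
have [->|q0] := eqVneq q 0; first by rewrite mulr0 tdeg0.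
by rewrite tdegM.
Qed.

Lemma tdeg_sum_le (I : Type) (s : seq I) (P : pred I) (F : I -> {mpoly R[n]}) d :
  (forall i, P i -> tdeg (F i) <= d)%N -> (tdeg (\sum_(i <- s | P i) F i) <= d)%N.
Proof.
move=> Fd; apply: (big_ind (fun x => tdeg x <= d)%N) => //; first by rewrite tdeg0.
move=> x y; rewrite /tdeg => xd yd.
have : (msize (x + y) <= maxn (msize x) (msize y))%N by apply: msizeD_le.
by move: (msize x) (msize y) (msize (x + y)) xd yd => a b c; lia.
Qed.

Lemma tdeg_prod_le (I : Type) (s : seq I) (P : pred I) (F : I -> {mpoly R[n]}) :
  (tdeg (\prod_(i <- s | P i) F i) <= \sum_(i <- s | P i) tdeg (F i))%N.
Proof.
elim/big_rec2: _ => [|i d p _ le_pd]; first by rewrite /tdeg msize1.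
exact: leq_trans (tdegM_le _ _) (leq_add _ le_pd).
Qed.

Lemma tdeg_dvd p q : q != 0 -> mdvd p q -> (tdeg p <= tdeg q)%N.
Proof.
move=> q0 [c def_q]; rewrite def_q in q0 *.
by rewrite tdegM ?leq_addl //; apply: contraNneq q0 => ->; rewrite ?mulr0 ?mul0r.
Qed.

Lemma tdeg_det_le k (A : 'M[{mpoly R[n]}]_k) (w : 'I_k -> nat) :
  (forall i j, tdeg (A i j) <= w j)%N -> (tdeg (\det A) <= \sum_j w j)%N.
Proof.
move=> Aw; apply: tdeg_sum_le => s _.
have -> : tdeg ((-1) ^+ s * \prod_i A i (s i)) = tdeg (\prod_i A i (s i)).
  by case: (s : bool); rewrite ?expr1 ?expr0 ?mulN1r ?mul1r ?tdegN.
apply: leq_trans (tdeg_prod_le _ _ _) _.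
by rewrite [leqRHS](reindex_inj (@perm_inj _ s)) leq_sum.
Qed.
End TotalDegree.

Lemma tdeg_lcm_le (R : idomainType) n (I : Type) (P : I -> Prop)
    (g : I -> {mpoly R[n]}) p (J : finType) (Q : pred J) (h : J -> I) :
  is_lcm P g p -> (forall j, Q j -> P (h j)) ->
  (forall i, P i -> exists2 j, Q j & g i = g (h j)) ->
  (tdeg p <= \sum_(j | Q j) tdeg (g (h j)))%N.
Proof.
move=> [dvd_p lcm_p] QP gQ; set q := (\prod_(j | Q j) g (h j))%R.
have dvd_q i : P i -> mdvd (g i) q.
  case/gQ=> j Qj ->; exists (\prod_(j' | Q j' && (j' != j)) g (h j'))%R.
  by rewrite /q (bigD1 j) //= mulrC.
have [/eqP/prodf_eq0[j Qj /eqP gj0] | q0] := eqVneq q 0%R.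
  by have [c ->] := dvd_p _ (QP j Qj); rewrite gj0 mulr0 tdeg0.
exact: leq_trans (tdeg_dvd q0 (lcm_p q dvd_q)) (tdeg_prod_le _ _ _).
Qed.

Definition lastcol N : 'I_(N + 1) := rshift N ord0.

Lemma lshift_neq_lastcol N (j : 'I_N) : lshift 1 j != lastcol N.
Proof. by rewrite -val_eqE /= addn0 neq_ltn ltn_ord. Qed.

Lemma sum_eq_codom_inj k N (f : 'I_k -> 'I_N) (x : 'I_N) : injective f ->
  (\sum_t (f t == x) = (x \in codom f))%N.
Proof.
move=> inj_f; have [/codomP[t0 ->] | xNf] := boolP (x \in codom f).
  rewrite (bigD1 t0) //= eqxx big1 // => t /negbTE nt0.
  by rewrite (inj_eq inj_f) nt0.
by rewrite big1 // => t _; case: eqP => // ftx; rewrite -ftx codom_f in xNf.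
Qed.

Section GyMinors.
Variables (F : fieldType) (m l k : nat) (r : 'I_m -> nat).
Variables (C : forall i : 'I_m, 'M[F]_(k, l)) (D : forall i : 'I_m, 'M[F]_(k, rprime r i)).
Local Notation N0 := (\sum_(i < m) (l + rprime r i))%N.

Lemma tdeg_Gy_le (i : 'I_k) (c : 'I_(N0 + 1)) :
  (tdeg (Gy C D i c) <= (c == lastcol N0))%N.
Proof.
rewrite /Gy -(splitK c); case: (split c) => [j|j] /=.
  by rewrite row_mxEl mxE tdegC.
rewrite ord1 row_mxEr eqxx /newcol summxE; apply: tdeg_sum_le => i' _.
rewrite summxE; apply: tdeg_sum_le => t _; rewrite !mxE.
by apply: leq_trans (tdegM_le _ _) _; rewrite tdegX tdegC.
Qed.

Lemma tdeg_det_colsub_Gy_le (f : 'I_k -> 'I_(N0 + 1)) : injective f ->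
  (tdeg (\det (colsub f (Gy C D))) <= (lastcol N0 \in codom f))%N.
Proof.
move=> inj_f; rewrite -sum_eq_codom_inj //.
by apply: tdeg_det_le => i t; rewrite mxE tdeg_Gy_le.
Qed.
End GyMinors.

Section Admissible.
Variables (N k l m : nat) (r : 'I_m -> nat).

Definition admissibleb (f : 'I_k -> 'I_N) : bool :=
  [forall a : 'I_k, forall b : 'I_k, (a < b)%N ==> (f a < f b)%N] &&
  [forall i : 'I_m, #|[set t | f t \in block (fun j => l + r j)%N i]| <= l]%N.

Lemma admissibleP (f : 'I_k -> 'I_N) : reflect (admissible l r f) (admissibleb f).
Proof.
apply: (iffP andP) => [[/forallP inc_f /forallP blk_f] | [inc_f blk_f]]; split.
- by move=> a b; move/forallP: (inc_f a) => /(_ b) /implyP.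
- exact: blk_f.
- by apply/forallP => a; apply/forallP => b; apply/implyP; apply: inc_f.
- exact/forallP.
Qed.

Lemma eq_admissible (f g : 'I_k -> 'I_N) : f =1 g -> admissible l r f -> admissible l r g.
Proof.
move=> fg [inc_f blk_f]; split=> [a b|i]; first by rewrite -!fg; apply: inc_f.
suff -> : [set t | g t \in block (fun j => l + r j)%N i] =
          [set t | f t \in block (fun j => l + r j)%N i] by exact: blk_f.
by apply/setP => t; rewrite !inE fg.
Qed.

Lemma admissible_inj (f : 'I_k -> 'I_N) : admissible l r f -> injective f.
Proof.
case=> inc_f _ a b fab.
case: (ltngtP a b) => [ab | ba | /val_inj //].
  by move: (inc_f a b ab); rewrite fab ltnn.
by move: (inc_f b a ba); rewrite fab ltnn.
Qed.
End Admissible.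

Lemma eq_incr_codom k N (f g : 'I_k -> 'I_N) :
  {homo f : a b / (a < b)%N} -> {homo g : a b / (a < b)%N} ->
  codom f =i codom g -> f =1 g.
Proof.
move=> inc_f inc_g fg.
have lt_val_trans : transitive (relpre (@nat_of_ord N) ltn) by move=> ? ? ?; apply: ltn_trans.
have lt_val_irr : irreflexive (relpre (@nat_of_ord N) ltn) by move=> x; apply: ltnn.
have sorted_codom (h : 'I_k -> 'I_N) :
    {homo h : a b / (a < b)%N} -> sorted (relpre val ltn) (codom h).
  move=> inc_h; rewrite codomE (homo_sorted (e := relpre val ltn) inc_h) //.
  by rewrite -sorted_map val_enum_ord iota_ltn_sorted.
have := irr_sorted_eq lt_val_trans lt_val_irr (sorted_codom f inc_f) (sorted_codom g inc_g) fg.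
by rewrite !codomE => /eq_in_map fg_enum t; apply: fg_enum; rewrite mem_enum.
Qed.

Lemma mem_block_lshift N d m (s s' : 'I_m -> nat) (i : 'I_m) (j : 'I_N) :
  block_start s i = block_start s' i -> (s i <= s' i)%N ->
  j \in block s i -> lshift d j \in block s' i.
Proof.
move=> start_ss' le_ss'; rewrite !inE /= start_ss' => /andP[-> lt_j] /=.
by apply: leq_trans lt_j _; rewrite leq_add2l.
Qed.

Lemma sum_block_start m (s : 'I_m -> nat) (i : 'I_m) :
  i.+1 = m -> (\sum_j s j = block_start s i + s i)%N.
Proof.
move=> im; rewrite (bigD1 i) //= addnC; congr addn; apply: eq_bigl => j.
have := ltn_ord j; rewrite -val_eqE /=; lia.
Qed.

Definition lowcodom N k (f : 'I_k -> 'I_(N + 1)) : {set 'I_N} :=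
  [set j | lshift 1 j \in codom f].

Lemma lastcol_notin_lshift N (S : {set 'I_N}) : lastcol N \notin lshift 1 @: S.
Proof. by apply/imsetP => -[j _ /eqP]; rewrite eq_sym (negbTE (lshift_neq_lastcol j)). Qed.

Lemma codom_lastcolU N k (f : 'I_k -> 'I_(N + 1)) : lastcol N \in codom f ->
  [set x in codom f] = lastcol N |: lshift 1 @: lowcodom f.
Proof.
move=> f_last; apply/setP => x; rewrite -(splitK x); case: (split x) => [j|j] /=.
  by rewrite !inE (negbTE (lshift_neq_lastcol j)) (mem_imset _ _ (@lshift_inj _ _)) inE.
by rewrite ord1 !inE eqxx.
Qed.

Lemma card_lowcodom N k (f : 'I_k -> 'I_(N + 1)) : injective f ->
  lastcol N \in codom f -> #|lowcodom f| = k.-1.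
Proof.
move=> inj_f f_last; have : #|[set x in codom f]| = k by rewrite cardsE card_codom ?card_ord.
rewrite codom_lastcolU // cardsU1 lastcol_notin_lshift card_imset; last exact: lshift_inj.
by move=> /(congr1 predn) <-.
Qed.

Section LastColumnSelections.
Variables (m l k : nat) (r : 'I_m -> nat).
Hypotheses (m_gt0 : (0 < m)%N) (r_gt0 : forall i, (1 <= r i)%N).
Local Notation ns := (fun i : 'I_m => l + rprime r i)%N.
Local Notation bs := (fun i : 'I_m => l + r i)%N.
Local Notation N0 := (\sum_(i < m) (l + rprime r i))%N.

Lemma block_start_rprime (i : 'I_m) : block_start ns i = block_start bs i.
Proof.
apply: eq_bigr => j lt_ji; rewrite /rprime; case: eqP => // j_last.
by move: (ltn_ord i) lt_ji; rewrite j_last; lia.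
Qed.

Lemma lshift_block (i : 'I_m) (j : 'I_N0) : j \in block ns i -> lshift 1 j \in block bs i.
Proof.
apply: mem_block_lshift; first exact: block_start_rprime.
by rewrite leq_add2l /rprime; case: ifP => // _; apply: leq_pred.
Qed.

Lemma lastcol_block (i : 'I_m) : (i : nat) = m.-1 -> lastcol N0 \in block bs i.
Proof.
move=> i_last; have im : i.+1 = m by rewrite i_last prednK.
rewrite inE /= addn0 (sum_block_start _ im) block_start_rprime /rprime i_last eqxx.
by have := r_gt0 i; lia.
Qed.

Lemma card_lowcodom_block (f : 'I_k -> 'I_(N0 + 1)) (i : 'I_m) :
  admissible l r f -> lastcol N0 \in codom f ->
  (#|lowcodom f :&: block ns i| + ((i : nat) == m.-1) <= l)%N.
Proof.
move=> [_ blk_f] f_last.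
set S := lshift 1 @: (lowcodom f :&: block ns i).
set T := [set x in codom f] :&: block bs i.
have card_S : #|S| = #|lowcodom f :&: block ns i| by apply/card_imset/lshift_inj.
have sub_ST : S \subset T.
  apply/subsetP => _ /imsetP[j /setIP[low_j blk_j] ->].
  by rewrite inE in low_j; rewrite in_setI (lshift_block blk_j) andbT inE.
have card_T : (#|T| <= l)%N.
  apply: leq_trans (blk_f i); apply: leq_trans (leq_imset_card f _).
  apply/subset_leq_card/subsetP => _ /setIP[/[!inE] /codomP[t ->] blk_t].
  by apply/imsetP; exists t; rewrite ?inE.
rewrite -card_S; case: eqP => [i_last | _].
  have sub_lastST : lastcol N0 |: S \subset T.
    by rewrite subUset sub_ST andbT sub1set in_setI inE f_last lastcol_block.
  have := subset_leq_card sub_lastST.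
  by rewrite cardsU1 lastcol_notin_lshift addnC => /leq_trans; apply.
by rewrite addn0 (leq_trans (subset_leq_card sub_ST)).
Qed.

Lemma card_admissible_lastcol_le :
  (#|[set f : {ffun 'I_k -> 'I_(N0 + 1)} | admissibleb l r f && (lastcol N0 \in codom f)]|
     <= Mcount k.-1 ns (fun i : 'I_m => if (i : nat) == m.-1 then l.-1 else l))%N.
Proof.
rewrite /Mcount -(card_in_imset (f := fun f : {ffun _} => lowcodom f)).
  apply/subset_leq_card/subsetP => _ /imsetP[f /setIdP[/admissibleP adm_f f_last] ->].
  rewrite inE card_lowcodom ?eqxx //=; last exact: admissible_inj adm_f.
  apply/forallP => i; have := card_lowcodom_block i adm_f f_last.
  by case: eqP => _ /=; lia.
move=> f g /setIdP[/admissibleP adm_f f_last] /setIdP[/admissibleP adm_g g_last] fg.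
apply/ffunP/eq_incr_codom; [exact: adm_f.1 | exact: adm_g.1 |] => x.
by rewrite -[LHS]inE -[RHS]inE codom_lastcolU // codom_lastcolU // fg.
Qed.
End LastColumnSelections.

Local Open Scope ring_scope.

Theorem proposition23 (F : finFieldType) (m l k : nat) (r : 'I_m -> nat)
  (C : forall i : 'I_m, 'M[F]_(k, l)) (D : forall i : 'I_m, 'M[F]_(k, rprime r i)) :
  (2 <= m)%N -> (1 <= l)%N -> (forall i, 1 <= r i)%N -> (l <= k)%N -> (k < m * l)%N ->
  is_PMDS l (rprime r) (G0 C D) ->
  forall p : {mpoly F[l]},
    is_lcm (admissible l r)
      (fun f : 'I_k -> 'I_(\sum_(i < m) (l + rprime r i) + 1) =>
         \det (colsub f (Gy C D))) p ->
    (tdeg p <= Mcount k.-1 (fun i => l + rprime r i)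
                 (fun i : 'I_m => if (i : nat) == m.-1 then l.-1 else l))%N.
Proof.
move=> m_ge2 _ r_gt0 _ _ _ p lcm_p.
apply: leq_trans _ (card_admissible_lastcol_le l k (ltnW m_ge2) r_gt0).
apply: leq_trans (tdeg_lcm_le (J := {ffun _ -> _}) (Q := admissibleb l r)
                               (h := fun f t => f t) lcm_p _ _) _.
- by move=> f /admissibleP.
- move=> f adm_f; exists (finfun f).
    by apply/admissibleP; apply: eq_admissible adm_f => t; rewrite ffunE.
  by congr (\det _); apply/matrixP => i j; rewrite !mxE ffunE.
rewrite -sum1_card; under [leqRHS]eq_bigl do rewrite inE.
rewrite [leqRHS]big_mkcondr leq_sum // => f /admissibleP /admissible_inj inj_f.
exact: tdeg_det_colsub_Gy_le.
Qed.
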